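(* Consider the disclosure model described in the context. Let $d,d'\in\mathcal{D}$ be such that $d'$ is more transparent than $d$ and $d$ is Pareto efficient. Then $\Gamma(d')\ge\Gamma(d)$.
   Context: Emissions lie in $E=[0,\bar e]$ with $\bar e>0$. The firm's type $\theta\in\Theta=[\underline\theta,\bar\theta]$ is private information with a continuous density $f=F'$ on $\Theta$. The firm's profit is $\tilde\pi(\theta,e,\tilde e)$ with actual emission $e$ and market-perceived emission $\tilde e$; it is strictly increasing in $e$ and strictly decreasing in $\tilde e$. Standing assumptions: $\tilde\pi$ is continuous on $\Theta\times E\times E$ and $C^2$ on its interior; $\pi(\theta,e):=\tilde\pi(\theta,e,e)$ is strictly concave in $e$; and $\pi(\theta,0)<\pi(\theta,\bar e)$ for all $\theta$. A disclosure policy is a function $d:E\to E$, identified with the partition of $E$ into its level sets. An emission $e$ is belief-compatible under $d$ if $e\ge e'$ whenever $d(e')=d(e)$; $\tilde E_d$ is the set of such levels. The type-$\theta$ firm chooses $e\in\tilde E_d$ maximizing $\pi(\theta,e)$. $\mathcal{D}$ is the set of policies for which the maximum is attained for every type. For $d\in\mathcal{D}$, $\pi_d(\theta)=\max_{e\in\tilde E_d}\pi(\theta,e)$, and $\gamma_d(\theta)$ is the lowest maximizer. Further, $\Pi(d)=\int_\Theta\pi_d\,dF$ and $\Gamma(d)=\int_\Theta\gamma_d\,dF$. For distinct $d',d\in\mathcal{D}$, $d'$ is more transparent than $d$ if the partition of $d'$ is finer than that of $d$. A policy $d\in\mathcal{D}$ is Pareto efficient if there is no $d''\in\mathcal{D}$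 with $\Pi(d'')\ge\Pi(d)$ and $\Gamma(d'')\le\Gamma(d)$, at least one strict. *)

From HB Require Import structures.
From mathcomp Require Import all_boot all_order all_algebra.
From mathcomp Require Import all_classical all_reals all_analysis.
Set Implicit Arguments. Unset Strict Implicit. Unset Printing Implicit Defensive.
Import Order.TTheory GRing.Theory Num.Theory.
Import numFieldNormedType.Exports.
Local Open Scope classical_set_scope.
Local Open Scope ring_scope.

Section Model.
Variable R : realType.

Definition Eset (ebar : R) : set R := `[0, ebar].
Definition Theta (tl th : R) : set R := `[tl, th].

(* uncurried profit, for continuity / differentiability statements *)
Definition uncurry3 (tpi : R -> R -> R -> R) : (R * R) * R -> R :=
  fun x => tpi x.1.1 x.1.2 x.2.

Definition pi_diag (tpi : R -> R -> R -> R) (t e : R) : R := tpi t e e.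

Definition standing_assumptions (ebar tl th : R) (tpi : R -> R -> R -> R) : Prop :=
  let E := Eset ebar in
  let T := Theta tl th in
  let g := uncurry3 tpi in
  let box : set ((R * R) * R) :=
    [set x | `]tl, th[%classic x.1.1 /\ `]0, ebar[%classic x.1.2
             /\ `]0, ebar[%classic x.2] in
  let cube : set ((R * R) * R) := [set x | T x.1.1 /\ E x.1.2 /\ E x.2] in
  {within cube, continuous g} /\
  (* C^2 on the interior: all first and second directional derivatives exist
     and the second ones are continuous *)
  (forall x, box x -> forall v, derivable g x v) /\
  (forall x, box x -> forall v w, derivable ('D_v g) x w) /\
  (forall v w, {within box, continuous ('D_w ('D_v g))}) /\
  (* strictly increasing in actual emission e *)
  (forall t et e1 e2, T t -> E et -> E e1 -> E e2 -> e1 < e2 ->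
      tpi t e1 et < tpi t e2 et) /\
  (* strictly decreasing in perceived emission et *)
  (forall t e et1 et2, T t -> E e -> E et1 -> E et2 -> et1 < et2 ->
      tpi t e et2 < tpi t e et1) /\
  (forall t e1 e2 l, T t -> E e1 -> E e2 -> e1 != e2 -> 0 < l < 1 ->
      l * pi_diag tpi t e1 + (1 - l) * pi_diag tpi t e2
        < pi_diag tpi t (l * e1 + (1 - l) * e2)) /\
  (forall t, T t -> pi_diag tpi t 0 < pi_diag tpi t ebar).

Definition is_cont_density (tl th : R) (f : R -> R) : Prop :=
  {within Theta tl th, continuous f} /\
  (forall t, Theta tl th t -> 0 <= f t) /\
  (\int[lebesgue_measure]_(t in Theta tl th) (f t)%:E = 1)%E.

(* A disclosure policy is a map d : E -> E (represented on R). *)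
Definition policy (ebar : R) (d : R -> R) : Prop :=
  forall e, Eset ebar e -> Eset ebar (d e).

Definition belief_compatible (ebar : R) (d : R -> R) : set R :=
  [set e | Eset ebar e /\ forall e', Eset ebar e' -> d e' = d e -> e' <= e].

Definition maximizers (ebar : R) (tpi : R -> R -> R -> R) (d : R -> R) (t : R)
  : set R :=
  [set e | belief_compatible ebar d e /\
           forall e', belief_compatible ebar d e' ->
             pi_diag tpi t e' <= pi_diag tpi t e].

Definition inD (ebar tl th : R) (tpi : R -> R -> R -> R) (d : R -> R) : Prop :=
  policy ebar d /\ forall t, Theta tl th t -> exists e, maximizers ebar tpi d t e.

Definition pi_d (ebar : R) (tpi : R -> R -> R -> R) (d : R -> R) (t : R) : R :=
  sup [set pi_diag tpi t e | e in belief_compatible ebar d].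

Definition gamma_d (ebar : R) (tpi : R -> R -> R -> R) (d : R -> R) (t : R) : R :=
  xget 0 [set e | maximizers ebar tpi d t e /\
                  forall e', maximizers ebar tpi d t e' -> e <= e'].

(* Pi(d) = int pi_d dF,  Gamma(d) = int gamma_d dF  (dF = f dtheta) *)
Definition Pi (ebar tl th : R) (tpi : R -> R -> R -> R) (f : R -> R) (d : R -> R)
  : \bar R :=
  (\int[lebesgue_measure]_(t in Theta tl th) (pi_d ebar tpi d t * f t)%:E)%E.

Definition Gamma (ebar tl th : R) (tpi : R -> R -> R -> R) (f : R -> R) (d : R -> R)
  : \bar R :=
  (\int[lebesgue_measure]_(t in Theta tl th) (gamma_d ebar tpi d t * f t)%:E)%E.

Definition finer_partition (ebar : R) (d' d : R -> R) : Prop :=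
  forall x y, Eset ebar x -> Eset ebar y -> d' x = d' y -> d x = d y.

Definition same_partition (ebar : R) (d' d : R -> R) : Prop :=
  finer_partition ebar d' d /\ finer_partition ebar d d'.

(* d' more transparent than d (for distinct policies, i.e. distinct partitions) *)
Definition more_transparent (ebar : R) (d' d : R -> R) : Prop :=
  ~ same_partition ebar d' d /\ finer_partition ebar d' d.

Definition pareto_efficient (ebar tl th : R) (tpi : R -> R -> R -> R)
    (f : R -> R) (d : R -> R) : Prop :=
  inD ebar tl th tpi d /\
  ~ (exists d'', inD ebar tl th tpi d'' /\
       (Pi ebar tl th tpi f d <= Pi ebar tl th tpi f d'')%E /\
       (Gamma ebar tl th tpi f d'' <= Gamma ebar tl th tpi f d)%E /\
       ((Pi ebar tl th tpi f d < Pi ebar tl th tpi f d'')%E \/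
        (Gamma ebar tl th tpi f d'' < Gamma ebar tl th tpi f d)%E)).

End Model.

(* A finer partition has fewer pooling constraints, so every emission level that is
   belief-compatible under d stays belief-compatible under d'.  Hence every type earns
   at least as much under d' and Pi(d') >= Pi(d).  If moreover Gamma(d') < Gamma(d),
   then d' would Pareto dominate d. *)
From HB Require Import structures.
From mathcomp Require Import all_boot all_order all_algebra.
From mathcomp Require Import all_classical all_reals all_analysis.
Import Order.TTheory GRing.Theory Num.Theory.
Local Open Scope classical_set_scope.
Local Open Scope ring_scope.

(* No measurability is needed: the integral is a difference of two suprema over simple
   functions below the positive and the negative part, and both are monotone. *)
Lemma le_integral_pointwise d (T : measurableType d) (R : realType)
    (mu : {measure set T -> \bar R}) (D : set T) (g h : T -> \bar R) :
  (forall x, D x -> (g x <= h x)%E) ->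
  (\int[mu]_(x in D) g x <= \int[mu]_(x in D) h x)%E.
Proof.
move=> gh; rewrite /integral; apply: leeB; apply: ereal_sup_le.
- move=> _ [s sg <-]; exists s => // x; apply: (le_trans (sg x)).
  apply: (@funepos_le _ _ setT); last exact: mem_set.
  by move=> y _; exact: lee_restrict.
- move=> _ [s sh <-]; exists s => // x; apply: (le_trans (sh x)).
  apply: (@funeneg_le _ _ setT); last exact: mem_set.
  by move=> y _; exact: lee_restrict.
Qed.

Section FinerPolicy.
Variables (R : realType) (ebar tl th : R) (tpi : R -> R -> R -> R) (d d' : R -> R).
Hypothesis d'_finer : finer_partition ebar d' d.

Lemma belief_compatible_finer :
  belief_compatible ebar d `<=` belief_compatible ebar d'.
Proof.
move=> e [Ee maxe]; split=> // e' Ee' d'e'e.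
by apply: maxe => //; exact: d'_finer.
Qed.

Lemma pi_d_finer t : Theta tl th t ->
  inD ebar tl th tpi d -> inD ebar tl th tpi d' ->
  pi_d ebar tpi d t <= pi_d ebar tpi d' t.
Proof.
move=> Tt [_ maxd] [_ maxd'].
have [m0 [bcm0 _]] := maxd t Tt.
have [m [_ maxm]] := maxd' t Tt.
apply: ge_sup; first by exists (pi_diag tpi t m0), m0.
move=> _ [e bce <-]; apply: ub_le_sup.
  by exists (pi_diag tpi t m) => _ [e' bce' <-]; exact: maxm.
by exists e => //; exact: belief_compatible_finer.
Qed.

Lemma Pi_finer (f : R -> R) : (forall t, Theta tl th t -> 0 <= f t) ->
  inD ebar tl th tpi d -> inD ebar tl th tpi d' ->
  (Pi ebar tl th tpi f d <= Pi ebar tl th tpi f d')%E.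
Proof.
move=> f_ge0 Dd Dd'; apply: le_integral_pointwise => t Tt.
by rewrite lee_fin ler_wpM2r ?f_ge0 ?pi_d_finer.
Qed.

End FinerPolicy.

Theorem proposition4 (R : realType) (ebar tl th : R) (tpi : R -> R -> R -> R)
    (f : R -> R) (d d' : R -> R) :
  0 < ebar -> tl < th ->
  standing_assumptions ebar tl th tpi ->
  is_cont_density tl th f ->
  inD ebar tl th tpi d -> inD ebar tl th tpi d' ->
  more_transparent ebar d' d ->
  pareto_efficient ebar tl th tpi f d ->
  (Gamma ebar tl th tpi f d <= Gamma ebar tl th tpi f d')%E.
Proof.
move=> _ _ _ [_ [f_ge0 _]] Dd Dd' [_ d'_finer] [_ undominated].
rewrite leNgt; apply/negP => Gamma_lt; apply: undominated.
exists d'; split=> //; split; first exact: Pi_finer.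
by split; [exact: ltW | right].
Qed.
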